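(* For each $n\in\mathbb N$, the subgroup $K_n^{\mathbb C}=\{a\in\mathcal B^{\mathbb C}_{TM}\mid a(\tau)=0\ \text{for all }\tau\in\mathcal T\text{ with }|\tau|\le n\}$ is a closed normal Lie subgroup of $\mathcal B^{\mathbb C}_{TM}$, and $K_n=K_n^{\mathbb C}\cap\mathcal B_{TM}$ is a closed normal subgroup of $\mathcal B_{TM}$. Both are split submanifolds of finite codimension (each is a closed affine subspace $e+\{a\in M^*_{\mathbb K}\mid a(\tau)=0\ \forall\,|\tau|\le n\}$ of the respective group).
   Context: $\mathcal T$ is the set of rooted trees (at least one vertex), $\mathcal T_0=\mathcal T\cup\{\emptyset\}$, $|\tau|$ the number of vertices. The complex tame Butcher group $\mathcal B^{\mathbb C}_{TM}$ is the set of $a\colon\mathcal T_0\to\mathbb C$ with $a(\emptyset)=1$ and $|a(\tau)|\le CK^{|\tau|}$ for some $C,K>0$ and all $\tau\in\mathcal T$, with product $(a\cdot b)(\tau)=\sum_{s\in\mathrm{OST}(\tau)}b(s_\tau)\prod_{\theta\in\tau\setminus s}a(\theta)$ (sum over ordered subtrees $s$: vertex subsets connected in $\tau$ containing the root if nonempty; $s_\tau$ the induced tree; $\tau\setminus s$ the remaining forest) and unit $e$; $\mathcal B_{TM}$ is its real-valued subgroup. For $\mathbb K\in\{\mathbb R,\mathbb C\}$, $M^*_{\mathbb K}=\{a\in\bigcup_k\mathbb K^{\mathcal T_0}(\omega_k)\mid a(\emptyset)=0\}$ with the inductive limit topology of the Banach spaces $\mathbb K^{\mathcal T_0}(\omega_k)=\{a\mid\sup_\tau|a(\tau)|2^{-k|\tau|}<\infty\}$;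 the groups are analytic Lie groups modelled on $M^*_{\mathbb K}$ via the global chart $a\mapsto a-e$. *)

From Stdlib Require Import Reals List Permutation.
Import ListNotations.
Open Scope R_scope.

(** * Scalars: K in {R, C}. C is modelled as R*R. *)
Record Scal := {
  car : Type;
  szero : car; sone : car;
  sadd : car -> car -> car; smul : car -> car -> car; sopp : car -> car;
  snrm : car -> R }.

Definition RS : Scal := {| car := R; szero := 0; sone := 1;
  sadd := Rplus; smul := Rmult; sopp := Ropp; snrm := Rabs |}.

Definition Cadd (z w : R * R) : R * R := (fst z + fst w, snd z + snd w).
Definition Cmul (z w : R * R) : R * R :=
  (fst z * fst w - snd z * snd w, fst z * snd w + snd z * fst w).
Definition Copp (z : R * R) : R * R := (- fst z, - snd z).
Definition Cnorm (z : R * R) : R := sqrt (fst z * fst z + snd z * snd z).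

Definition CS : Scal := {| car := R * R; szero := (0, 0); sone := (1, 0);
  sadd := Cadd; smul := Cmul; sopp := Copp; snrm := Cnorm |}.

(** * Rooted trees.  A (planar) representative; non-planar rooted trees are
    isomorphism classes, and all maps on trees are required to be
    isomorphism-invariant. *)
Inductive tree : Type := Node : list tree -> tree.

Inductive tree_iso : tree -> tree -> Prop :=
| iso_node : forall cs ds ds', Permutation ds ds' -> Forall2 tree_iso cs ds' ->
    tree_iso (Node cs) (Node ds).

Fixpoint tsize (t : tree) : nat :=
  match t with Node cs => S (list_sum (map tsize cs)) end.

Definition opt_cons (o : option tree) (l : list tree) : list tree :=
  match o with None => l | Some s => s :: l end.

(** Ordered subtrees of t: pairs (s_t, t \ s), with s_t = None for the empty
    subtree.  Either s is empty (forest = [t]), or s contains the root and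
    independently selects an ordered subtree in each child. *)
Fixpoint ost (t : tree) : list (option tree * list tree) :=
  match t with
  | Node cs =>
    let fix combos (l : list tree) : list (list tree * list tree) :=
      match l with
      | [] => [([], [])]
      | c :: l' =>
          flat_map (fun p => map (fun q => (opt_cons (fst p) (fst q), snd p ++ snd q))
                                 (combos l'))
                   (ost c)
      end in
    (None, [t]) :: map (fun q => (Some (Node (fst q)), snd q)) (combos cs)
  end.

(** * Maps T_0 -> K, with T_0 = option tree (None = empty tree). *)
Definition fn (S : Scal) := option tree -> car S.

Definition ssum (S : Scal) (l : list (car S)) : car S := fold_right (sadd S) (szero S) l.
Definition sprod (S : Scal) (l : list (car S)) : car S := fold_right (smul S) (sone S) l.

Definition invariant {S : Scal} (a : fn S) : Prop :=
  forall t u, tree_iso t u -> a (Some t) = a (Some u).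

Definition feq {S : Scal} (a b : fn S) : Prop := forall x, a x = b x.

Definition unit_e (S : Scal) : fn S :=
  fun x => match x with None => sone S | Some _ => szero S end.

Definition fadd {S : Scal} (a b : fn S) : fn S := fun x => sadd S (a x) (b x).
Definition fscale {S : Scal} (l : car S) (a : fn S) : fn S := fun x => smul S l (a x).
Definition fsub {S : Scal} (a b : fn S) : fn S := fun x => sadd S (a x) (sopp S (b x)).
Definition fzero (S : Scal) : fn S := fun _ => szero S.

Definition bmul {S : Scal} (a b : fn S) : fn S :=
  fun x => match x with
  | None => b None
  | Some t => ssum S (map (fun p => smul S (b (fst p))
                                 (sprod S (map (fun th => a (Some th)) (snd p)))) (ost t))
  end.

(** Tame Butcher group B^K_TM (K = R gives B_TM, K = C gives B^C_TM). *)
Definition in_BTM (S : Scal) (a : fn S) : Prop :=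
  invariant a /\ a None = sone S /\
  exists C K, 0 < C /\ 0 < K /\ forall t, snrm S (a (Some t)) <= C * K ^ tsize t.

Definition in_Kn (S : Scal) (n : nat) (a : fn S) : Prop :=
  in_BTM S a /\ forall t, (tsize t <= n)%nat -> a (Some t) = szero S.

(** * The model space M*_K with the (locally convex) inductive limit topology. *)
Definition in_Ek (S : Scal) (k : nat) (a : fn S) : Prop :=
  exists M, forall t, snrm S (a (Some t)) <= M * (2 ^ (k * tsize t)).

Definition in_Mstar (S : Scal) (a : fn S) : Prop :=
  invariant a /\ a None = szero S /\ exists k, in_Ek S k a.

Definition abs_convex (S : Scal) (V : fn S -> Prop) : Prop :=
  forall u v l m, V u -> V v -> snrm S l + snrm S m <= 1 ->
    V (fadd (fscale l u) (fscale m v)).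

Definition zero_nbhd_in_steps (S : Scal) (V : fn S -> Prop) : Prop :=
  forall k, exists r, 0 < r /\ forall a, in_Mstar S a ->
    (forall t, snrm S (a (Some t)) <= r * (2 ^ (k * tsize t))) -> V a.

Definition Mopen (S : Scal) (U : fn S -> Prop) : Prop :=
  (forall x, U x -> in_Mstar S x) /\
  forall x, U x -> exists V, (forall v, V v -> in_Mstar S v) /\ abs_convex S V /\
    zero_nbhd_in_steps S V /\ forall v, V v -> U (fadd x v).

Definition Mclosed (S : Scal) (C : fn S -> Prop) : Prop :=
  (forall x, C x -> in_Mstar S x) /\ Mopen S (fun x => in_Mstar S x /\ ~ C x).

Definition in_Fn (S : Scal) (n : nat) (a : fn S) : Prop :=
  in_Mstar S a /\ forall t, (tsize t <= n)%nat -> a (Some t) = szero S.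

Definition linear_on_M (S : Scal) (P : fn S -> fn S) : Prop :=
  (forall x, in_Mstar S x -> in_Mstar S (P x)) /\
  (forall x y, in_Mstar S x -> in_Mstar S y -> feq (P (fadd x y)) (fadd (P x) (P y))) /\
  (forall l x, in_Mstar S x -> feq (P (fscale l x)) (fscale l (P x))).

Definition continuous_on_M (S : Scal) (P : fn S -> fn S) : Prop :=
  forall U, Mopen S U -> Mopen S (fun x => in_Mstar S x /\ U (P x)).

Definition lin_comb (S : Scal) (cs : list (car S)) (gs : list (fn S)) : fn S :=
  fold_right (fun p acc => fadd (fscale (fst p) (snd p)) acc) (fzero S) (combine cs gs).

(** F is a split (topologically complemented) subspace of finite codimension:
    F is the kernel of a continuous linear projection with finite-dimensional
    range. *)
Definition split_finite_codim (S : Scal) (F : fn S -> Prop) : Prop :=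
  exists (P : fn S -> fn S) (gs : list (fn S)),
    linear_on_M S P /\ continuous_on_M S P /\
    (forall x, in_Mstar S x -> feq (P (P x)) (P x)) /\
    (forall x, in_Mstar S x -> (feq (P x) (fzero S) <-> F x)) /\
    Forall (in_Mstar S) gs /\
    (forall x, in_Mstar S x -> exists cs, length cs = length gs /\ feq (P x) (lin_comb S cs gs)).

From Stdlib Require Import Reals List Permutation Lra Lia Classical ClassicalEpsilon
  Relation_Operators FunctionalExtensionality.
Import ListNotations.
Open Scope R_scope.

(* For |t| <= n, the vertices of t split as an ordered subtree s and the forest t \ s with
   |s| + |t \ s| = |t|, so (a b)(t) only involves values of a and b on trees with at most n
   vertices.  If a vanishes there, the only surviving cut of (a b)(t) is the full subtree,
   which yields closure under products and inverses, and g a agrees with g there, which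
   yields normality.  Tameness of a product follows from |OST(t)| <= 2^|t|, and its
   invariance from the fact that isomorphic trees have matching ordered subtrees.  In the
   chart a |-> a - e, K_n becomes e + F_n, where F_n is the kernel of the truncation to the
   coordinates a(t), |t| <= n: a continuous projection whose range is spanned by the
   indicators of the finitely many isomorphism classes of such trees. *)

(* The axioms shared by R and C that the argument uses. *)
Class abs_comm_ring (S : Scal) : Prop := {
  addA : forall x y z, sadd S x (sadd S y z) = sadd S (sadd S x y) z;
  addC : forall x y, sadd S x y = sadd S y x;
  add0 : forall x, sadd S (szero S) x = x;
  addN : forall x, sadd S x (sopp S x) = szero S;
  mulA : forall x y z, smul S x (smul S y z) = smul S (smul S x y) z;
  mulC : forall x y, smul S x y = smul S y x;
  mul1 : forall x, smul S (sone S) x = x;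
  mul0 : forall x, smul S (szero S) x = szero S;
  nrm0 : snrm S (szero S) = 0;
  nrm1 : snrm S (sone S) = 1;
  nrm_ge0 : forall x, 0 <= snrm S x;
  nrm_triangle : forall x y, snrm S (sadd S x y) <= snrm S x + snrm S y;
  nrm_mul : forall x y, snrm S (smul S x y) = snrm S x * snrm S y;
  nrm_opp : forall x, snrm S (sopp S x) = snrm S x;
  nrm_eq0 : forall x, snrm S x = 0 -> x = szero S }.

#[export] Instance RS_abs_comm_ring : abs_comm_ring RS.
Proof.
  split; simpl; intros; try ring.
  - apply Rabs_R0.
  - apply Rabs_R1.
  - apply Rabs_pos.
  - apply Rabs_triang.
  - apply Rabs_mult.
  - apply Rabs_Ropp.
  - destruct (Req_dec x 0) as [|Hx]; auto. apply Rabs_no_R0 in Hx. contradiction.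
Qed.

Lemma Cnorm_triangle a b c d :
  sqrt ((a+c)*(a+c) + (b+d)*(b+d)) <= sqrt (a*a+b*b) + sqrt (c*c+d*d).
Proof.
  assert (HA : 0 <= a*a+b*b) by nra. assert (HB : 0 <= c*c+d*d) by nra.
  assert (cauchy_schwarz : a*c+b*d <= sqrt (a*a+b*b) * sqrt (c*c+d*d)).
  { rewrite <- sqrt_mult by auto.
    destruct (Rle_or_lt (a*c+b*d) 0).
    { pose proof (sqrt_pos ((a*a+b*b)*(c*c+d*d))). lra. }
    rewrite <- (sqrt_pow2 (a*c+b*d)) by lra. apply sqrt_le_1_alt.
    pose proof (pow2_ge_0 (a*d-b*c)). nra. }
  pose proof (sqrt_pos (a*a+b*b)). pose proof (sqrt_pos (c*c+d*d)).
  apply Rsqr_incr_0_var; [|lra]. unfold Rsqr.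
  rewrite sqrt_sqrt by (pose proof (pow2_ge_0 (a+c)); pose proof (pow2_ge_0 (b+d)); nra).
  pose proof (sqrt_sqrt _ HA). pose proof (sqrt_sqrt _ HB).
  set (u := sqrt (a*a+b*b)) in *. set (v := sqrt (c*c+d*d)) in *. nra.
Qed.

#[export] Instance CS_abs_comm_ring : abs_comm_ring CS.
Proof.
  split; simpl; unfold Cadd, Cmul, Copp, Cnorm; intros;
   repeat match goal with p : (R*R)%type |- _ => destruct p end; simpl in *;
   try (f_equal; ring).
  - replace (0*0+0*0) with 0 by ring. apply sqrt_0.
  - replace (1*1+0*0) with 1 by ring. apply sqrt_1.
  - apply sqrt_pos.
  - apply Cnorm_triangle.
  - rewrite <- sqrt_mult by nra. f_equal. ring.
  - match goal with H : sqrt _ = 0 |- _ => apply sqrt_eq_0 in H; [|nra] end. f_equal; nra.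
Qed.

Section ScalarFacts.
Context {S : Scal} `{abs_comm_ring S}.

Lemma addr0 x : sadd S x (szero S) = x.
Proof. rewrite addC, add0. reflexivity. Qed.

Lemma mulr0 x : smul S x (szero S) = szero S.
Proof. rewrite mulC, mul0. reflexivity. Qed.

Lemma mulr1 x : smul S x (sone S) = x.
Proof. rewrite mulC, mul1. reflexivity. Qed.

Lemma opp0 : sopp S (szero S) = szero S.
Proof. rewrite <- (add0 (sopp S (szero S))). apply addN. Qed.

Lemma addrNK x v : sadd S (sadd S x v) (sopp S v) = x.
Proof. rewrite <- addA, addN. apply addr0. Qed.

End ScalarFacts.

Section TreeInduction.
Variable P : tree -> Prop.
Hypothesis HP : forall cs, (forall c, In c cs -> P c) -> P (Node cs).

Fixpoint tree_ind_nested (t : tree) : P t :=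
  match t with
  | Node cs => HP cs ((fix go (l : list tree) : forall c, In c l -> P c :=
       match l with
       | [] => fun c H => False_ind _ H
       | x :: l' => fun c H => match H with
                   | or_introl e => eq_ind x P (tree_ind_nested x) c e
                   | or_intror H' => go l' c H' end end) cs)
  end.

End TreeInduction.

(* The inner fixpoint of [ost], lifted to the top level so that one can reason about it. *)
Fixpoint combos (l : list tree) : list (list tree * list tree) :=
  match l with
  | [] => [([], [])]
  | c :: l' =>
      flat_map (fun p => map (fun q => (opt_cons (fst p) (fst q), snd p ++ snd q))
                             (combos l'))
               (ost c)
  end.

Lemma ost_Node cs : ost (Node cs) =
  (None, [Node cs]) :: map (fun q => (Some (Node (fst q)), snd q)) (combos cs).
Proof. reflexivity. Qed.

Definition osize (o : option tree) : nat := match o with None => 0%nat | Some t => tsize t end.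
Definition fsize (f : list tree) : nat := list_sum (map tsize f).

Lemma fsize_app f g : fsize (f ++ g) = (fsize f + fsize g)%nat.
Proof. unfold fsize. rewrite map_app, list_sum_app. reflexivity. Qed.

Lemma fsize_opt_cons o f : fsize (opt_cons o f) = (osize o + fsize f)%nat.
Proof. destruct o; reflexivity. Qed.

Lemma tsize_pos t : (1 <= tsize t)%nat.
Proof. destruct t; simpl; lia. Qed.

Lemma length_le_fsize f : (length f <= fsize f)%nat.
Proof. induction f as [|t f IH]; unfold fsize in *; simpl; [lia|]. pose proof (tsize_pos t). lia. Qed.

Lemma tsize_le_fsize t f : In t f -> (tsize t <= fsize f)%nat.
Proof.
  induction f as [|u f IH]; unfold fsize in *; simpl; intros Ht; [contradiction|].
  destruct Ht as [->|Ht]; [lia|]. specialize (IH Ht). lia.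
Qed.

Lemma combos_size l :
  (forall c, In c l -> forall p, In p (ost c) -> (osize (fst p) + fsize (snd p) = tsize c)%nat) ->
  forall q, In q (combos l) -> (fsize (fst q) + fsize (snd q) = fsize l)%nat.
Proof.
  induction l as [|c l IH]; simpl; intros Hl q Hq.
  - destruct Hq as [<-|[]]. reflexivity.
  - apply in_flat_map in Hq as [p [Hp Hq]]. apply in_map_iff in Hq as [q' [<- Hq']].
    simpl. rewrite fsize_opt_cons, fsize_app.
    specialize (IH (fun c' Hc' => Hl c' (or_intror Hc')) q' Hq').
    specialize (Hl c (or_introl eq_refl) p Hp). unfold fsize in *. simpl. lia.
Qed.

Lemma ost_size t p : In p (ost t) -> (osize (fst p) + fsize (snd p) = tsize t)%nat.
Proof.
  revert p. induction t as [cs IH] using tree_ind_nested. intros p Hp.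
  rewrite ost_Node in Hp. destruct Hp as [<-|Hp].
  - unfold fsize. simpl. lia.
  - apply in_map_iff in Hp as [q [<- Hq]]. simpl.
    pose proof (combos_size cs IH q Hq). unfold fsize in *. lia.
Qed.

Lemma ost_None t p : In p (ost t) -> fst p = None -> snd p = [t].
Proof.
  destruct t as [cs]. rewrite ost_Node. intros [<-|Hp] E; auto.
  apply in_map_iff in Hp as [q [<- _]]. discriminate.
Qed.

Lemma length_flat_map_const {A B} (f : A -> list B) (l : list A) k :
  (forall x, length (f x) = k) -> length (flat_map f l) = (length l * k)%nat.
Proof. intros Hf. induction l; simpl; auto. rewrite length_app, Hf, IHl. lia. Qed.

Lemma combos_length l : (forall c, In c l -> (length (ost c) <= 2 ^ tsize c)%nat) ->
  (length (combos l) <= 2 ^ fsize l)%nat.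
Proof.
  induction l as [|c l IH]; simpl; intros Hl; auto.
  rewrite (length_flat_map_const _ _ (length (combos l))) by (intros; apply length_map).
  unfold fsize in *; simpl. rewrite Nat.pow_add_r.
  apply Nat.mul_le_mono; auto.
Qed.

Lemma ost_length t : (length (ost t) <= 2 ^ tsize t)%nat.
Proof.
  induction t as [cs IH] using tree_ind_nested. rewrite ost_Node. simpl. rewrite length_map.
  pose proof (combos_length cs IH). unfold fsize in *.
  pose proof (Nat.pow_nonzero 2 (list_sum (map tsize cs))). lia.
Qed.

Lemma tree_iso_refl t : tree_iso t t.
Proof.
  induction t as [cs IH] using tree_ind_nested.
  apply (iso_node cs cs cs); [apply Permutation_refl|].
  induction cs; constructor; auto with datatypes.
Qed.

Lemma tree_iso_tsize t u : tree_iso t u -> tsize t = tsize u.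
Proof.
  revert u. induction t as [cs IH] using tree_ind_nested. intros u Hu.
  inversion Hu as [? ds ds' Hperm HF]; subst. simpl. f_equal.
  transitivity (list_sum (map tsize ds')).
  2:{ symmetry. apply Permutation_list_sum. apply Permutation_map. auto. }
  clear Hu Hperm. induction HF; simpl; auto with datatypes.
Qed.

Section FiniteSums.
Context {S : Scal} `{abs_comm_ring S}.

Lemma ssum_app l1 l2 : ssum S (l1 ++ l2) = sadd S (ssum S l1) (ssum S l2).
Proof. induction l1; simpl. - rewrite add0; auto. - rewrite IHl1, addA; auto. Qed.

Lemma ssum_flat_map {A B} (f : B -> car S) (g : A -> list B) l :
  ssum S (map f (flat_map g l)) = ssum S (map (fun x => ssum S (map f (g x))) l).
Proof. induction l; simpl; auto. rewrite map_app, ssum_app, IHl. auto. Qed.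

Lemma ssum_ext_in {A} (f g : A -> car S) l : (forall x, In x l -> f x = g x) ->
  ssum S (map f l) = ssum S (map g l).
Proof. intros Hfg; f_equal; apply map_ext_in; auto. Qed.

Lemma ssum_eq0 {A} (f : A -> car S) l : (forall x, In x l -> f x = szero S) ->
  ssum S (map f l) = szero S.
Proof. induction l; simpl; intros Hf; auto. rewrite Hf, IHl by auto. apply add0. Qed.

Lemma ssum_add {A} (f g : A -> car S) l :
  ssum S (map (fun x => sadd S (f x) (g x)) l) = sadd S (ssum S (map f l)) (ssum S (map g l)).
Proof.
  induction l; simpl. - rewrite add0; auto.
  - rewrite IHl, !addA. f_equal. rewrite <- !addA. f_equal. apply addC.
Qed.

Lemma ssum_exchange {A B} (F : A -> B -> car S) l1 l2 :
  ssum S (map (fun x => ssum S (map (fun y => F x y) l2)) l1) =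
  ssum S (map (fun y => ssum S (map (fun x => F x y) l1)) l2).
Proof.
  induction l1; simpl.
  - symmetry. apply ssum_eq0. auto.
  - rewrite IHl1, <- ssum_add. auto.
Qed.

Lemma sprod_perm l l' : Permutation l l' -> sprod S l = sprod S l'.
Proof.
  induction 1; simpl; auto.
  - rewrite IHPermutation; auto.
  - rewrite !mulA. f_equal. apply mulC.
  - congruence.
Qed.

Lemma sprod_eq0 (a : fn S) f t : In t f -> a (Some t) = szero S ->
  sprod S (map (fun th => a (Some th)) f) = szero S.
Proof.
  induction f; simpl; intros Ht E; [contradiction|]. destruct Ht as [->|Ht].
  - rewrite E. apply mul0.
  - rewrite IHf by auto. apply mulr0.
Qed.

Lemma nrm_ssum_le {A} (f : A -> car S) l B :
  (forall x, In x l -> snrm S (f x) <= B) -> snrm S (ssum S (map f l)) <= INR (length l) * B.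
Proof.
  induction l as [|x l IH]; intros Hf.
  - simpl. rewrite nrm0. lra.
  - cbn [length map ssum fold_right]. rewrite S_INR. eapply Rle_trans; [apply nrm_triangle|].
    specialize (IH (fun y Hy => Hf y (or_intror Hy))). specialize (Hf x (or_introl eq_refl)).
    unfold ssum in *. lra.
Qed.

Lemma nrm_sprod_le (a : tree -> car S) C K f :
  1 <= C -> 1 <= K -> (forall t, In t f -> snrm S (a t) <= C * K ^ tsize t) ->
  snrm S (sprod S (map a f)) <= C ^ length f * K ^ fsize f.
Proof.
  intros HC HK. induction f as [|t f IH]; simpl; intros Ha.
  - rewrite nrm1. lra.
  - rewrite nrm_mul. unfold fsize in *; simpl. rewrite pow_add.
    specialize (IH (fun u Hu => Ha u (or_intror Hu))). specialize (Ha t (or_introl eq_refl)).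
    replace (C * C ^ length f * (K ^ tsize t * K ^ list_sum (map tsize f))) with
      ((C * K ^ tsize t) * (C ^ length f * K ^ list_sum (map tsize f))) by ring.
    apply Rmult_le_compat; auto using nrm_ge0.
Qed.

End FiniteSums.

Definition forest_iso (f f' : list tree) : Prop :=
  exists f'', Permutation f' f'' /\ Forall2 tree_iso f f''.

Definition otree_iso (o o' : option tree) : Prop :=
  match o, o' with
  | None, None => True
  | Some t, Some t' => tree_iso t t'
  | _, _ => False
  end.

Lemma otree_iso_refl o : otree_iso o o.
Proof. destruct o; simpl; auto using tree_iso_refl. Qed.

Lemma forest_iso_perm f f' : Permutation f f' -> forest_iso f f'.
Proof.
  intros Hp. exists f. split; [symmetry; auto|].
  clear Hp. induction f; constructor; auto using tree_iso_refl.
Qed.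

Lemma forest_iso_refl f : forest_iso f f.
Proof. apply forest_iso_perm. auto. Qed.

Lemma forest_iso_app f f' g g' : forest_iso f f' -> forest_iso g g' -> forest_iso (f ++ g) (f' ++ g').
Proof.
  intros [f'' [Pf Ff]] [g'' [Pg Fg]]. exists (f'' ++ g''). split.
  - apply Permutation_app; auto.
  - apply Forall2_app; auto.
Qed.

Lemma forest_iso_opt_cons o o' f f' :
  otree_iso o o' -> forest_iso f f' -> forest_iso (opt_cons o f) (opt_cons o' f').
Proof.
  destruct o as [t|], o' as [t'|]; simpl; intros Ho [f'' [P F]]; try contradiction.
  - exists (t' :: f''). split; auto.
  - exists f''. split; auto.
Qed.

Section CutSums.
Context {S : Scal} `{abs_comm_ring S}.

Definition cut_sum (t : tree) (G : option tree -> list tree -> car S) : car S :=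
  ssum S (map (fun p => G (fst p) (snd p)) (ost t)).

Definition combo_sum (l : list tree) (G : list tree -> list tree -> car S) : car S :=
  ssum S (map (fun q => G (fst q) (snd q)) (combos l)).

Definition cut_invariant (G : option tree -> list tree -> car S) : Prop :=
  forall o o' f f', otree_iso o o' -> forest_iso f f' -> G o f = G o' f'.

Definition combo_invariant (G : list tree -> list tree -> car S) : Prop :=
  forall x x' y y', forest_iso x x' -> forest_iso y y' -> G x y = G x' y'.

Lemma cut_sum_Node cs G : cut_sum (Node cs) G =
  sadd S (G None [Node cs]) (combo_sum cs (fun x y => G (Some (Node x)) y)).
Proof. unfold cut_sum, combo_sum. rewrite ost_Node. simpl. rewrite map_map. reflexivity. Qed.

Lemma combo_sum_cons c l G : combo_sum (c :: l) G =
  ssum S (map (fun p => combo_sum l (fun x y => G (opt_cons (fst p) x) (snd p ++ y))) (ost c)).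
Proof.
  unfold combo_sum. simpl. rewrite ssum_flat_map. f_equal. apply map_ext. intros p.
  rewrite map_map. reflexivity.
Qed.

Lemma combo_invariant_shift G o f :
  combo_invariant G -> combo_invariant (fun x y => G (opt_cons o x) (f ++ y)).
Proof.
  intros HG x x' y y' Hx Hy. apply HG.
  - apply forest_iso_opt_cons; auto using otree_iso_refl.
  - apply forest_iso_app; auto using forest_iso_refl.
Qed.

(* Swapping two adjacent children only reorders the two nested sums over their ordered subtrees. *)
Lemma combo_sum_perm l l' G : Permutation l l' -> combo_invariant G ->
  combo_sum l G = combo_sum l' G.
Proof.
  intros Hp. revert G.
  induction Hp as [|c l l' _ IH|c d l|l l' l'' _ IH1 _ IH2]; intros G HG.
  - reflexivity.
  - rewrite !combo_sum_cons. apply ssum_ext_in. intros p _. apply IH.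
    apply combo_invariant_shift; auto.
  - rewrite !combo_sum_cons.
    erewrite map_ext by (intros p; rewrite combo_sum_cons; reflexivity).
    rewrite ssum_exchange. f_equal. apply map_ext. intros q.
    rewrite combo_sum_cons. f_equal. apply map_ext. intros p.
    unfold combo_sum. f_equal. apply map_ext. intros r. apply HG.
    + apply forest_iso_perm. destruct (fst p), (fst q); simpl; auto using perm_swap.
    + apply forest_iso_perm. rewrite !app_assoc. apply Permutation_app_tail.
      apply Permutation_app_comm.
  - rewrite IH1, IH2; auto.
Qed.

Lemma combo_sum_Forall2 l l' G :
  Forall2 (fun c c' => forall G, cut_invariant G -> cut_sum c G = cut_sum c' G) l l' ->
  combo_invariant G -> combo_sum l G = combo_sum l' G.
Proof.
  intros HF. revert G. induction HF as [|c c' l l' Hc _ IH]; intros G HG; auto.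
  rewrite !combo_sum_cons.
  transitivity (ssum S (map (fun p => combo_sum l' (fun x y => G (opt_cons (fst p) x) (snd p ++ y))) (ost c))).
  - apply ssum_ext_in. intros p _. apply IH. apply combo_invariant_shift; auto.
  - apply (Hc (fun o f => combo_sum l' (fun x y => G (opt_cons o x) (f ++ y)))).
    intros o o' f f' Ho Hf. unfold combo_sum. f_equal. apply map_ext. intros q. apply HG.
    + apply forest_iso_opt_cons; auto using forest_iso_refl.
    + apply forest_iso_app; auto using forest_iso_refl.
Qed.

Lemma cut_sum_iso t u G : tree_iso t u -> cut_invariant G -> cut_sum t G = cut_sum u G.
Proof.
  revert u G. induction t as [cs IH] using tree_ind_nested. intros u G Hu HG.
  inversion Hu as [? ds ds' Hperm HF]; subst.
  rewrite !cut_sum_Node. f_equal.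
  - apply HG; simpl; auto. exists [Node ds]. split; auto.
  - assert (HG' : combo_invariant (fun x y => G (Some (Node x)) y)).
    { intros x x' y y' [x'' [Px Fx]] Hy. apply HG; auto. simpl. econstructor; eauto. }
    transitivity (combo_sum ds' (fun x y => G (Some (Node x)) y)).
    + apply combo_sum_Forall2; auto.
      clear Hu Hperm. induction HF; constructor; auto with datatypes.
    + apply combo_sum_perm; auto. symmetry; auto.
Qed.

Lemma combo_sum_trivial_cuts l G :
  (forall c, In c l -> forall G, (forall o f, f <> [] -> G o f = szero S) ->
     cut_sum c G = G (Some c) []) ->
  (forall x y, y <> [] -> G x y = szero S) -> combo_sum l G = G l [].
Proof.
  revert G. induction l as [|c l IH]; intros G Hl HG.
  - unfold combo_sum. simpl. apply addr0.
  - rewrite combo_sum_cons.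
    transitivity (cut_sum c (fun o f => G (opt_cons o l) (f ++ []))).
    + apply ssum_ext_in. intros p _. apply IH; auto with datatypes.
      intros x y Hy. apply HG. destruct (snd p); simpl; auto; discriminate.
    + rewrite Hl; auto with datatypes. intros o f Hf. apply HG. rewrite app_nil_r; auto.
Qed.

Lemma cut_sum_trivial_cuts t G : (forall o f, f <> [] -> G o f = szero S) ->
  cut_sum t G = G (Some t) [].
Proof.
  revert G. induction t as [cs IH] using tree_ind_nested. intros G HG.
  rewrite cut_sum_Node, HG, add0 by discriminate.
  apply combo_sum_trivial_cuts; auto.
Qed.

End CutSums.

Section ButcherProduct.
Context {S : Scal} `{abs_comm_ring S}.

Definition butcher_term (a b : fn S) (o : option tree) (f : list tree) : car S :=
  smul S (b o) (sprod S (map (fun th => a (Some th)) f)).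

Lemma bmul_Some (a b : fn S) t : bmul a b (Some t) = cut_sum t (butcher_term a b).
Proof. reflexivity. Qed.

Lemma butcher_term_invariant (a b : fn S) :
  invariant a -> invariant b -> cut_invariant (butcher_term a b).
Proof.
  intros Ha Hb o o' f f' Ho [f'' [Hp HF]]. unfold butcher_term. f_equal.
  - destruct o, o'; simpl in Ho; try contradiction; auto.
  - rewrite (sprod_perm (map (fun th => a (Some th)) f') (map (fun th => a (Some th)) f''))
      by (apply Permutation_map; auto).
    f_equal. clear Hp. induction HF; simpl; f_equal; auto.
Qed.

Lemma bmul_invariant (a b : fn S) : invariant a -> invariant b -> invariant (bmul a b).
Proof.
  intros Ha Hb t u Htu. rewrite !bmul_Some.
  apply cut_sum_iso; auto using butcher_term_invariant.
Qed.

Lemma tame_bound_ge1 (a : fn S) : in_BTM S a ->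
  exists C K, 1 <= C /\ 1 <= K /\ forall t, snrm S (a (Some t)) <= C * K ^ tsize t.
Proof.
  intros [_ [_ [C [K [HC [HK Ha]]]]]]. exists (Rmax C 1), (Rmax K 1).
  split; [apply Rmax_r|]. split; [apply Rmax_r|]. intros t.
  eapply Rle_trans; [apply Ha|]. apply Rmult_le_compat; try lra.
  - apply pow_le; lra.
  - apply Rmax_l.
  - apply pow_incr. split; [lra|apply Rmax_l].
Qed.

Lemma tame_common_bound (a b : fn S) : in_BTM S a -> in_BTM S b ->
  exists C K, 1 <= C /\ 1 <= K /\ (forall t, snrm S (a (Some t)) <= C * K ^ tsize t) /\
    forall o, snrm S (b o) <= C * K ^ osize o.
Proof.
  intros Ha Hb. destruct (tame_bound_ge1 a Ha) as [Ca [Ka [HCa [HKa Ba]]]].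
  destruct (tame_bound_ge1 b Hb) as [Cb [Kb [HCb [HKb Bb]]]].
  exists (Rmax Ca Cb), (Rmax Ka Kb).
  assert (Hraise : forall C K s, 0 <= C -> 0 <= K -> C <= Rmax Ca Cb -> K <= Rmax Ka Kb ->
            C * K ^ s <= Rmax Ca Cb * Rmax Ka Kb ^ s).
  { intros C K s HC HK HC' HK'. apply Rmult_le_compat; auto using pow_le, pow_incr. }
  split; [apply (Rle_trans _ Ca); auto using Rmax_l|].
  split; [apply (Rle_trans _ Ka); auto using Rmax_l|].
  split.
  - intros t. eapply Rle_trans; [apply Ba|]. apply Hraise; auto using Rmax_l; lra.
  - intros [t|]; simpl.
    + eapply Rle_trans; [apply Bb|]. apply Hraise; auto using Rmax_r; lra.
    + destruct Hb as [_ [-> _]]. rewrite nrm1.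
      pose proof (Rmax_l Ca Cb). lra.
Qed.

(* With common constants C, K >= 1, each of the at most 2^|t| terms is bounded by
   C^(|t|+1) K^|t|. *)
Lemma bmul_in_BTM (a b : fn S) : in_BTM S a -> in_BTM S b -> in_BTM S (bmul a b).
Proof.
  intros Ha Hb. destruct (tame_common_bound a b Ha Hb) as [C [K [HC [HK [Ba Bb]]]]].
  split; [apply bmul_invariant; [apply Ha|apply Hb]|].
  split; [apply Hb|].
  exists C, (2 * C * K). split; [lra|]. split; [nra|].
  intros t. rewrite bmul_Some. unfold cut_sum.
  assert (Hterm : forall p, In p (ost t) ->
            snrm S (butcher_term a b (fst p) (snd p)) <= C * (C ^ tsize t * K ^ tsize t)).
  { intros p Hp. unfold butcher_term. rewrite nrm_mul.
    pose proof (ost_size t p Hp) as Hs. pose proof (length_le_fsize (snd p)) as Hl.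
    eapply Rle_trans.
    { apply Rmult_le_compat; auto using nrm_ge0. apply (nrm_sprod_le _ C K); auto. }
    replace (C * K ^ osize (fst p) * (C ^ length (snd p) * K ^ fsize (snd p))) with
      (C * (C ^ length (snd p) * (K ^ osize (fst p) * K ^ fsize (snd p)))) by ring.
    rewrite <- pow_add, Hs.
    apply Rmult_le_compat_l; [lra|]. apply Rmult_le_compat_r; [apply pow_le; lra|].
    apply Rle_pow; auto. lia. }
  eapply Rle_trans; [apply (nrm_ssum_le _ _ _ Hterm)|].
  assert (Hlen : INR (length (ost t)) <= 2 ^ tsize t).
  { replace 2 with (INR 2) by reflexivity. rewrite <- pow_INR. apply le_INR. apply ost_length. }
  rewrite !Rpow_mult_distr.
  assert (0 <= C ^ tsize t * K ^ tsize t) by (apply Rmult_le_pos; apply pow_le; lra).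
  replace (C * (2 ^ tsize t * C ^ tsize t * K ^ tsize t)) with
    (2 ^ tsize t * (C * (C ^ tsize t * K ^ tsize t))) by ring.
  apply Rmult_le_compat_r; nra.
Qed.

End ButcherProduct.

Section NormalSubgroup.
Context {S : Scal} `{abs_comm_ring S}.
Variable n : nat.

Lemma Kn_unit : in_Kn S n (unit_e S).
Proof.
  split; [split; [|split]|].
  - intros t u _. reflexivity.
  - reflexivity.
  - exists 1, 1. split; [lra|]. split; [lra|]. intros t. simpl. rewrite nrm0, pow1. lra.
  - intros. reflexivity.
Qed.

Lemma Kn_bmul (a b : fn S) : in_Kn S n a -> in_Kn S n b -> in_Kn S n (bmul a b).
Proof.
  intros [Ba Za] [Bb Zb]. split; [apply bmul_in_BTM; auto|].
  intros t Ht. rewrite bmul_Some. apply ssum_eq0.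
  intros p Hp. pose proof (ost_size t p Hp) as Hs. unfold butcher_term.
  destruct (fst p) as [s|] eqn:Ep.
  - rewrite Zb by (simpl in Hs; lia). apply mul0.
  - rewrite (ost_None t p Hp Ep). simpl. rewrite Za by auto. rewrite mul0. apply mulr0.
Qed.

(* For |t| <= n only the cut with empty forest survives in (a b)(t), and it contributes b(t). *)
Lemma Kn_right_inverse (a b : fn S) :
  in_Kn S n a -> in_BTM S b -> feq (bmul a b) (unit_e S) -> in_Kn S n b.
Proof.
  intros [Ba Za] Bb E. split; auto. intros t Ht.
  specialize (E (Some t)). rewrite bmul_Some in E. simpl in E.
  set (G := fun o f => match f with [] => butcher_term a b o f | _ => szero S end).
  assert (EG : cut_sum t (butcher_term a b) = cut_sum t G).
  { apply ssum_ext_in. intros p Hp. unfold G.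
    destruct (snd p) as [|th f] eqn:Ef; auto.
    pose proof (ost_size t p Hp) as Hs. rewrite Ef in Hs.
    unfold butcher_term. rewrite (sprod_eq0 a (th :: f) th); [apply mulr0|simpl; auto|].
    apply Za. unfold fsize in Hs. simpl in Hs. lia. }
  rewrite EG, cut_sum_trivial_cuts in E.
  - unfold G, butcher_term in E. simpl in E. rewrite mulr1 in E. auto.
  - intros o [|] Hf; [contradiction|reflexivity].
Qed.

Lemma bmul_Kn_low (g a : fn S) : in_Kn S n a -> forall t, (tsize t <= n)%nat ->
  bmul g a (Some t) = g (Some t).
Proof.
  intros [[_ [Na _]] Za] [cs] Ht. rewrite bmul_Some, cut_sum_Node.
  assert (Hcombo : combo_sum cs (fun x y => butcher_term g a (Some (Node x)) y) = szero S).
  { apply ssum_eq0. intros q Hq.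
    pose proof (combos_size cs (fun c _ => ost_size c) q Hq) as Hs.
    unfold butcher_term. rewrite Za by (simpl in *; unfold fsize in *; lia). apply mul0. }
  rewrite Hcombo, addr0. unfold butcher_term. simpl. rewrite Na, mul1, mulr1. auto.
Qed.

(* (g a h)(t) only involves values of g a on trees of size <= |t| <= n, where g a agrees
   with g; so (g a h)(t) = (g h)(t) = e(t) = 0. *)
Lemma Kn_conj (a g h : fn S) : in_Kn S n a -> in_BTM S g -> in_BTM S h ->
  feq (bmul g h) (unit_e S) -> in_Kn S n (bmul (bmul g a) h).
Proof.
  intros Ka Bg Bh E. split; [apply bmul_in_BTM; auto; apply bmul_in_BTM; auto; apply Ka|].
  intros t Ht. specialize (E (Some t)). simpl in E. rewrite bmul_Some in *.
  rewrite <- E. apply ssum_ext_in. intros p Hp. unfold butcher_term. f_equal. f_equal.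
  apply map_ext_in. intros th Hth. apply bmul_Kn_low; auto.
  pose proof (ost_size t p Hp). pose proof (tsize_le_fsize th (snd p) Hth). lia.
Qed.

End NormalSubgroup.

Lemma pow2_pos m : 0 < 2 ^ m.
Proof. apply pow_lt. lra. Qed.

Lemma pow2_unbounded K : exists k, K <= 2 ^ k.
Proof.
  destruct (INR_archimed 1 K) as [k Hk]; [lra|]. exists k.
  assert (Hpow : forall m, INR m <= 2 ^ m).
  { induction m as [|m IH]; [simpl; lra|]. rewrite S_INR. simpl.
    pose proof (pow_R1_Rle 2 m). lra. }
  specialize (Hpow k). lra.
Qed.

Section ModelSpace.
Context {S : Scal} `{abs_comm_ring S}.

Lemma Ek_bound_abs k (a : fn S) M :
  (forall t, snrm S (a (Some t)) <= M * 2 ^ (k * tsize t)) ->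
  forall t, snrm S (a (Some t)) <= Rabs M * 2 ^ (k * tsize t).
Proof.
  intros Ha t. eapply Rle_trans; [apply Ha|].
  apply Rmult_le_compat_r; [left; apply pow2_pos|apply Rle_abs].
Qed.

Lemma Mstar_add (x v : fn S) : in_Mstar S x -> in_Mstar S v -> in_Mstar S (fadd x v).
Proof.
  intros [Ix [Nx [kx [Mx Bx]]]] [Iv [Nv [kv [Mv Bv]]]]. split; [|split].
  - intros t u Htu. unfold fadd. rewrite (Ix t u Htu), (Iv t u Htu). auto.
  - unfold fadd. rewrite Nx, Nv. apply add0.
  - exists (Nat.max kx kv), (Rabs Mx + Rabs Mv). intros t. unfold fadd.
    eapply Rle_trans; [apply nrm_triangle|].
    pose proof (Ek_bound_abs _ _ _ Bx t). pose proof (Ek_bound_abs _ _ _ Bv t).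
    assert (Hmono : forall k, (k <= Nat.max kx kv)%nat ->
              2 ^ (k * tsize t) <= 2 ^ (Nat.max kx kv * tsize t)).
    { intros k Hk. apply Rle_pow; [lra|]. apply Nat.mul_le_mono_r; auto. }
    pose proof (Hmono kx (Nat.le_max_l _ _)). pose proof (Hmono kv (Nat.le_max_r _ _)).
    pose proof (Rabs_pos Mx). pose proof (Rabs_pos Mv). nra.
Qed.

Lemma Mstar_scale l (x : fn S) : in_Mstar S x -> in_Mstar S (fscale l x).
Proof.
  intros [Ix [Nx [k [M Bx]]]]. split; [|split].
  - intros t u Htu. unfold fscale. rewrite (Ix t u Htu). auto.
  - unfold fscale. rewrite Nx. apply mulr0.
  - exists k, (snrm S l * Rabs M). intros t. unfold fscale. rewrite nrm_mul, Rmult_assoc.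
    apply Rmult_le_compat_l; [apply nrm_ge0|]. apply Ek_bound_abs; auto.
Qed.

Lemma Kn_iff_Fn_sub_unit n (a : fn S) : in_BTM S a ->
  (in_Kn S n a <-> in_Fn S n (fsub a (unit_e S))).
Proof.
  intros Ba. unfold fsub. simpl. split.
  - intros [_ Za]. destruct Ba as [Ia [Na [C [K [HC [HK B]]]]]].
    split; [split; [|split]|].
    + intros t u Htu. simpl. rewrite (Ia t u Htu). auto.
    + simpl. rewrite Na. apply addN.
    + destruct (pow2_unbounded K) as [k Hk]. exists k, C. intros t. simpl.
      rewrite opp0, addr0. eapply Rle_trans; [apply B|].
      apply Rmult_le_compat_l; [lra|]. rewrite pow_mult. apply pow_incr; lra.
    + intros t Ht. simpl. rewrite Za, opp0 by auto. apply add0.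
  - intros [_ Z]. split; auto. intros t Ht. specialize (Z t Ht). simpl in Z.
    rewrite opp0, addr0 in Z. auto.
Qed.

Lemma Kn_unit_add_Fn n (v : fn S) : in_Fn S n v -> in_Kn S n (fadd (unit_e S) v).
Proof.
  intros [[Iv [Nv [k [M B]]]] Zv]. unfold fadd. split; [split; [|split]|].
  - intros t u Htu. simpl. rewrite (Iv t u Htu). auto.
  - simpl. rewrite Nv. apply addr0.
  - exists (Rabs M + 1), (2 ^ k). split; [pose proof (Rabs_pos M); lra|].
    split; [apply pow2_pos|].
    intros t. simpl. rewrite add0. eapply Rle_trans; [apply B|].
    rewrite <- pow_mult. apply Rmult_le_compat_r; [left; apply pow2_pos|].
    pose proof (Rle_abs M). lra.
  - intros t Ht. simpl. rewrite Zv by auto. apply add0.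
Qed.

(* Outside F_n some coordinate x(t0) with |t0| <= n is nonzero, and the coordinate
   functional v |-> v(t0) is bounded on every step E_k. *)
Lemma Fn_closed n : Mclosed S (in_Fn S n).
Proof.
  split; [intros x [Mx _]; auto|].
  split; [intros x [Mx _]; auto|].
  intros x [Mx NF].
  assert (Ht0 : exists t0, (tsize t0 <= n)%nat /\ x (Some t0) <> szero S).
  { apply NNPP. intros Hn. apply NF. split; auto. intros t Ht.
    apply NNPP. intros Hx. apply Hn. eauto. }
  destruct Ht0 as [t0 [Ht0 Hx0]].
  assert (Hpos : 0 < snrm S (x (Some t0))).
  { destruct (nrm_ge0 (x (Some t0))) as [|E]; auto. exfalso. apply Hx0, nrm_eq0. auto. }
  set (c := snrm S (x (Some t0)) / 2).
  exists (fun v => in_Mstar S v /\ snrm S (v (Some t0)) <= c). split; [|split; [|split]].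
  - intros v [Mv _]; auto.
  - intros u v l m [Mu Bu] [Mv Bv] Hlm. split.
    + apply Mstar_add; apply Mstar_scale; auto.
    + unfold fadd, fscale. eapply Rle_trans; [apply nrm_triangle|]. rewrite !nrm_mul.
      pose proof (nrm_ge0 l). pose proof (nrm_ge0 m). unfold c in *. nra.
  - intros k. exists (c / 2 ^ (k * tsize t0)).
    pose proof (pow2_pos (k * tsize t0)). split.
    + unfold c. apply Rdiv_lt_0_compat; lra.
    + intros a Ma Ba. split; auto. specialize (Ba t0).
      replace c with (c / 2 ^ (k * tsize t0) * 2 ^ (k * tsize t0)) by (field; lra). auto.
  - intros v [Mv Bv]. split; [apply Mstar_add; auto|].
    intros [_ Z]. specialize (Z t0 Ht0). unfold fadd in Z.
    pose proof (nrm_triangle (sadd S (x (Some t0)) (v (Some t0))) (sopp S (v (Some t0)))) as T.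
    rewrite addrNK, Z, nrm0, nrm_opp in T. unfold c in *. lra.
Qed.

End ModelSpace.

Lemma lists_bounded_enum {A} (L : list A) m : exists LL, forall l, (length l <= m)%nat ->
  incl l L -> In l LL.
Proof.
  induction m as [|m [LL HLL]].
  - exists [[]]. intros [|x l] Hl _; simpl in *; auto. lia.
  - exists (LL ++ flat_map (fun c => map (cons c) LL) L).
    intros [|x l] Hl Hincl; apply in_or_app.
    + left. apply HLL; simpl; [lia|intros c []].
    + right. apply in_flat_map. exists x. split; [apply Hincl; simpl; auto|].
      apply in_map. apply HLL; [simpl in Hl; lia|]. intros c Hc. apply Hincl; simpl; auto.
Qed.

Lemma trees_bounded_enum n : exists L, forall u, (tsize u <= n)%nat <-> In u L.
Proof.
  assert (Hcover : exists L, forall u, (tsize u <= n)%nat -> In u L).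
  { induction n as [|n [L HL]].
    - exists []. intros u Hu. pose proof (tsize_pos u). lia.
    - destruct (lists_bounded_enum L n) as [LL HLL].
      exists (map Node LL). intros [cs] Hs. apply in_map. simpl in Hs. apply HLL.
      + pose proof (length_le_fsize cs). unfold fsize in *. lia.
      + intros c Hc. apply HL. pose proof (tsize_le_fsize c cs Hc). unfold fsize in *. lia. }
  destruct Hcover as [L HL]. exists (filter (fun u => Nat.leb (tsize u) n) L).
  intros u. rewrite filter_In, Nat.leb_le. intuition.
Qed.

(* [tree_iso] is not proved to be an equivalence; its equivalence closure suffices. *)
Definition tree_eqv : tree -> tree -> Prop := clos_refl_sym_trans tree tree_iso.

Lemma tree_eqv_tsize t u : tree_eqv t u -> tsize t = tsize u.
Proof. induction 1; auto using tree_iso_tsize. congruence. Qed.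

Lemma invariant_eqv {S : Scal} (x : fn S) t u : invariant x -> tree_eqv t u -> x (Some t) = x (Some u).
Proof. intros Hx. induction 1; auto. congruence. Qed.

Lemma iso_class_representatives L : exists R, incl R L /\
  (forall u, In u L -> Exists (fun t => tree_eqv t u) R) /\
  ForallOrdPairs (fun t t' => ~ tree_eqv t t') R.
Proof.
  induction L as [|u L [R [Hincl [Hcov Hdist]]]].
  - exists []. repeat split; [intros ? []|intros ? []|constructor].
  - destruct (classic (Exists (fun t => tree_eqv t u) R)) as [Hu|Hu].
    + exists R. split; [intros t Ht; right; auto|]. split; auto.
      intros w [<-|Hw]; auto.
    + exists (u :: R). split; [apply incl_cons; [left|apply incl_tl]; auto|]. split.
      * intros w [<-|Hw]; [left; apply rst_refl|right; auto].
      * constructor; auto. apply Forall_forall. intros t Ht Hut.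
        apply Hu, Exists_exists. exists t. split; auto. apply rst_sym; auto.
Qed.

Section FiniteCodimension.
Context {S : Scal} `{abs_comm_ring S}.

Definition class_ind (t : tree) : fn S := fun o =>
  match o with
  | None => szero S
  | Some u => if excluded_middle_informative (tree_eqv t u) then sone S else szero S
  end.

Lemma class_ind_Mstar t : in_Mstar S (class_ind t).
Proof.
  split; [|split; [reflexivity|]].
  - intros u v Huv. unfold class_ind.
    assert (tree_eqv u v) by (apply rst_step; auto).
    destruct (excluded_middle_informative (tree_eqv t u)) as [E1|E1];
    destruct (excluded_middle_informative (tree_eqv t v)) as [E2|E2]; auto; exfalso.
    + apply E2. eapply rst_trans; eauto.
    + apply E1. eapply rst_trans; eauto. apply rst_sym; auto.
  - exists 0%nat, 1. intros u. simpl. unfold class_ind.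
    destruct (excluded_middle_informative _); [rewrite nrm1|rewrite nrm0]; lra.
Qed.

Definition class_coords (x : fn S) (R : list tree) : list (car S) := map (fun t => x (Some t)) R.

Lemma class_coords_cons x t R : class_coords x (t :: R) = x (Some t) :: class_coords x R.
Proof. reflexivity. Qed.

Lemma lin_comb_cons c cs g gs o :
  lin_comb S (c :: cs) (g :: gs) o = sadd S (smul S c (g o)) (lin_comb S cs gs o).
Proof. reflexivity. Qed.

Lemma lin_comb_class_ind_None x R : lin_comb S (class_coords x R) (map class_ind R) None = szero S.
Proof.
  induction R as [|t R IH]; [reflexivity|]. rewrite class_coords_cons. simpl map.
  rewrite lin_comb_cons, IH. simpl. rewrite mulr0. apply add0.
Qed.

Lemma lin_comb_class_ind_out x R u : ~ Exists (fun t => tree_eqv t u) R ->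
  lin_comb S (class_coords x R) (map class_ind R) (Some u) = szero S.
Proof.
  induction R as [|t R IH]; intros Hu; [reflexivity|]. rewrite class_coords_cons. simpl map.
  rewrite lin_comb_cons, IH by (intro; apply Hu; right; auto). simpl.
  destruct (excluded_middle_informative (tree_eqv t u)) as [E|E].
  - exfalso. apply Hu. left; auto.
  - rewrite mulr0. apply add0.
Qed.

(* Pairwise inequivalence of the representatives makes exactly one term survive. *)
Lemma lin_comb_class_ind_in x R u : invariant x ->
  ForallOrdPairs (fun t t' => ~ tree_eqv t t') R -> Exists (fun t => tree_eqv t u) R ->
  lin_comb S (class_coords x R) (map class_ind R) (Some u) = x (Some u).
Proof.
  intros Hx. induction R as [|t R IH]; intros Hdist Hu; [inversion Hu|].
  inversion Hdist as [|? ? Ht HR]; subst. rewrite class_coords_cons. simpl map.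
  rewrite lin_comb_cons. simpl.
  destruct (excluded_middle_informative (tree_eqv t u)) as [E|E].
  - rewrite lin_comb_class_ind_out, addr0, mulr1 by
      (intros Hin; apply Exists_exists in Hin as [t' [Ht' E']];
       apply (proj1 (Forall_forall _ _) Ht t' Ht'); eapply rst_trans; eauto; apply rst_sym; auto).
    apply invariant_eqv; auto.
  - rewrite mulr0, add0. apply IH; auto. inversion Hu; subst; auto. contradiction.
Qed.

Definition trunc (n : nat) (x : fn S) : fn S := fun o =>
  match o with
  | None => szero S
  | Some t => if Nat.leb (tsize t) n then x (Some t) else szero S
  end.

Lemma trunc_fadd n x y : trunc n (fadd x y) = fadd (trunc n x) (trunc n y).
Proof.
  apply functional_extensionality. intros [t|]; unfold trunc, fadd; simpl.
  - destruct (Nat.leb _ _); auto. rewrite add0; auto.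
  - rewrite add0; auto.
Qed.

Lemma trunc_fscale n l x : trunc n (fscale l x) = fscale l (trunc n x).
Proof.
  apply functional_extensionality. intros [t|]; unfold trunc, fscale; simpl.
  - destruct (Nat.leb _ _); auto. rewrite mulr0; auto.
  - rewrite mulr0; auto.
Qed.

Lemma trunc_Mstar n x : in_Mstar S x -> in_Mstar S (trunc n x).
Proof.
  intros [Ix [Nx [k [M B]]]]. split; [|split]; auto.
  - intros t u Htu. unfold trunc. rewrite (tree_iso_tsize t u Htu). destruct (Nat.leb _ _); auto.
  - exists k, (Rabs M). intros t. unfold trunc. destruct (Nat.leb _ _).
    + apply Ek_bound_abs; auto.
    + rewrite nrm0. apply Rmult_le_pos; [apply Rabs_pos|left; apply pow2_pos].
Qed.

Lemma trunc_linear n : linear_on_M S (trunc n).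
Proof.
  split; [|split].
  - apply trunc_Mstar.
  - intros x y _ _ o. rewrite trunc_fadd; auto.
  - intros l x _ o. rewrite trunc_fscale; auto.
Qed.

(* Pull back the absolutely convex neighbourhood along [trunc n], which is linear and
   does not increase any coefficient. *)
Lemma trunc_continuous n : continuous_on_M S (trunc n).
Proof.
  intros U [HU1 HU2]. split; [intros x [Mx _]; auto|].
  intros x [Mx Ux]. destruct (HU2 _ Ux) as [V [VM [Vconv [Vnbhd Vsub]]]].
  exists (fun v => in_Mstar S v /\ V (trunc n v)). split; [|split; [|split]].
  - intros v [Mv _]; auto.
  - intros u v l m [Mu Vu] [Mv Vv] Hlm. split.
    + apply Mstar_add; apply Mstar_scale; auto.
    + rewrite trunc_fadd, !trunc_fscale. apply Vconv; auto.
  - intros k. destruct (Vnbhd k) as [r [Hr Hball]]. exists r. split; auto.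
    intros a Ma Ba. split; auto. apply Hball; [apply trunc_Mstar; auto|].
    intros t. unfold trunc. destruct (Nat.leb _ _); auto.
    rewrite nrm0. apply Rmult_le_pos; [lra|left; apply pow2_pos].
  - intros v [Mv Vv]. split; [apply Mstar_add; auto|]. rewrite trunc_fadd. apply Vsub; auto.
Qed.

Lemma trunc_idempotent n x : feq (trunc n (trunc n x)) (trunc n x).
Proof. intros [t|]; unfold trunc; auto. destruct (Nat.leb _ _); auto. Qed.

Lemma trunc_eq0_iff_Fn n x : in_Mstar S x -> (feq (trunc n x) (fzero S) <-> in_Fn S n x).
Proof.
  intros Mx. split.
  - intros Z. split; auto. intros t Ht. specialize (Z (Some t)). unfold trunc in Z.
    apply Nat.leb_le in Ht. rewrite Ht in Z. auto.
  - intros [_ Z] [t|]; unfold trunc, fzero; auto. destruct (Nat.leb _ _) eqn:E; auto.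
    apply Z, Nat.leb_le; auto.
Qed.

Lemma Fn_split_finite_codim n : split_finite_codim S (in_Fn S n).
Proof.
  destruct (trees_bounded_enum n) as [L HL].
  destruct (iso_class_representatives L) as [R [HRL [HRcov HRdist]]].
  exists (trunc n), (map class_ind R).
  split; [apply trunc_linear|]. split; [apply trunc_continuous|].
  split; [intros x _; apply trunc_idempotent|]. split; [apply trunc_eq0_iff_Fn|].
  split; [apply Forall_forall; intros g Hg; apply in_map_iff in Hg as [t [<- _]];
          apply class_ind_Mstar|].
  intros x Mx. exists (class_coords x R). split; [unfold class_coords; rewrite !length_map; auto|].
  intros [u|].
  - unfold trunc. destruct (Nat.leb (tsize u) n) eqn:E.
    + symmetry. apply lin_comb_class_ind_in; auto; [apply Mx|].
      apply HRcov, HL, Nat.leb_le; auto.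
    + symmetry. apply lin_comb_class_ind_out. intros Hin.
      apply Exists_exists in Hin as [t [Ht Htu]].
      apply tree_eqv_tsize in Htu. apply HRL, HL in Ht. apply Nat.leb_gt in E. lia.
  - symmetry. apply lin_comb_class_ind_None.
Qed.

End FiniteCodimension.

Theorem proposition2p10 :
  forall n : nat, forall S : Scal, (S = CS \/ S = RS) ->
    in_Kn S n (unit_e S) /\
    (forall a b, in_Kn S n a -> in_Kn S n b -> in_Kn S n (bmul a b)) /\
    (forall a b, in_Kn S n a -> in_BTM S b -> feq (bmul a b) (unit_e S) -> in_Kn S n b) /\
    (forall a g h, in_Kn S n a -> in_BTM S g -> in_BTM S h ->
       feq (bmul g h) (unit_e S) -> in_Kn S n (bmul (bmul g a) h)) /\
    (forall a, in_BTM S a -> (in_Kn S n a <-> in_Fn S n (fsub a (unit_e S)))) /\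
    (forall v, in_Fn S n v -> in_Kn S n (fadd (unit_e S) v)) /\
    Mclosed S (in_Fn S n) /\
    split_finite_codim S (in_Fn S n).
Proof.
  intros n S HS.
  assert (abs_comm_ring S) by (destruct HS; subst; typeclasses eauto).
  split; [apply Kn_unit|].
  split; [apply Kn_bmul|].
  split; [apply Kn_right_inverse|].
  split; [apply Kn_conj|].
  split; [apply Kn_iff_Fn_sub_unit|].
  split; [apply Kn_unit_add_Fn|].
  split; [apply Fn_closed|].
  apply Fn_split_finite_codim.
Qed.
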